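(* For every $0\le k\le n$ and every $\lambda\vdash n$, $$m(\lambda,\beta_{H_n^k})=\sum_{C\in\hat S_n}\chi_\lambda(C)\,(n-|\mathrm{supp}(C)|)_k .$$
   Context: Permutations are composed as functions, and $\pi\in S_n$ is identified with the permutation matrix whose $(i,j)$ entry is $1$ iff $i=\pi(j)$. For $A\in GL_n(\mathbb{Z}_2)$ let $\eta(A)$ (resp. $\theta(A)$) be the partition obtained by sorting the row sums (resp. column sums) of $A$, computed as integers, in weakly decreasing order. For $0\le k\le n$, $H_n^k=\{A\in GL_n(\mathbb{Z}_2)\mid \eta(A)=(n,n-1,\dots,n-k+1,1^{n-k}),\ \theta(A)=((k+1)^{n-k},k,k-1,\dots,1)\}$. $\beta_{H_n^k}$ is the complex permutation representation of $S_n$ on the space with basis $H_n^k$ given by $\pi\circ A=\pi A\pi^{-1}$. $\hat S_n$ is the set of conjugacy classes of $S_n$; $\chi_\lambda$ is the irreducible character indexed by $\lambda$ and $m(\lambda,\beta)$ the multiplicity of this irreducible in $\beta$; $\mathrm{supp}(C)$ is the set of points moved by an element of $C$ (its size depends only on $C$); $(m)_k=m(m-1)\cdots(m-k+1)$ is the falling factorial. *)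

From mathcomp Require Import all_boot all_algebra all_fingroup all_field all_character.

Set Implicit Arguments.
Unset Strict Implicit.
Unset Printing Implicit Defensive.

Import GRing.Theory Num.Theory.

Definition rowsum (n : nat) (A : 'M['Z_2]_n) (i : 'I_n) : nat :=
  \sum_(j < n) val (A i j).
Definition colsum (n : nat) (A : 'M['Z_2]_n) (j : 'I_n) : nat :=
  \sum_(i < n) val (A i j).

Definition eta (n : nat) (A : 'M['Z_2]_n) : seq nat :=
  sort geq [seq rowsum A i | i <- enum 'I_n].
Definition theta (n : nat) (A : 'M['Z_2]_n) : seq nat :=
  sort geq [seq colsum A j | j <- enum 'I_n].

Definition eta_target (n k : nat) : seq nat :=
  [seq n - i | i <- iota 0 k] ++ nseq (n - k) 1%N.
Definition theta_target (n k : nat) : seq nat :=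
  nseq (n - k) k.+1 ++ [seq k - i | i <- iota 0 k].

Definition Hnk (n k : nat) : {set 'M['Z_2]_n} :=
  [set A | [&& A \in unitmx, eta A == eta_target n k & theta A == theta_target n k]].

(* pi A pi^-1, where pi is identified with the matrix whose (i,j) entry is
   1 iff i = pi(j):  (pi A pi^-1) i j = A (pi^-1 i) (pi^-1 j). *)
Definition pconj (n : nat) (s : 'S_n) (A : 'M['Z_2]_n) : 'M['Z_2]_n :=
  \matrix_(i, j) A (s^-1%g i) (s^-1%g j).

Lemma pconj1 (n : nat) (A : 'M['Z_2]_n) : pconj 1%g A = A.
Proof. by apply/matrixP => i j; rewrite mxE invg1 !perm1. Qed.

Lemma pconjM (n : nat) (x y : 'S_n) (A : 'M['Z_2]_n) :
  pconj (x * y)%g A = pconj y (pconj x A).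
Proof. by apply/matrixP => i j; rewrite !mxE invMg !permM. Qed.

Lemma geq_sort_perm (n : nat) (f : 'I_n -> nat) (s : 'S_n) :
  sort geq [seq f (s i) | i <- enum 'I_n] = sort geq [seq f i | i <- enum 'I_n].
Proof.
apply/perm_sortP.
- by move=> a b; rewrite /= leq_total.
- by move=> a b c /= hba hac; apply: leq_trans hac hba.
- by move=> a b /= /andP [h1 h2]; apply/eqP; rewrite eqn_leq h1 h2.
have -> : [seq f (s i) | i <- enum 'I_n] = [seq f i | i <- [seq s i | i <- enum 'I_n]].
  by elim: (enum _) => //= a l ->.
apply: perm_map; apply: uniq_perm.
- by rewrite map_inj_uniq ?enum_uniq //; apply: perm_inj.
- exact: enum_uniq.
move=> i; rewrite mem_enum inE; apply/mapP; exists (s^-1%g i).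
  by rewrite mem_enum.
by rewrite permKV.
Qed.

Lemma pconj_Hnk (n k : nat) (s : 'S_n) (A : 'M['Z_2]_n) :
  A \in Hnk n k -> pconj s A \in Hnk n k.
Proof.
rewrite !inE => /and3P [uA eA tA]; apply/and3P; split.
- have -> : pconj s A = row_perm s^-1%g (col_perm s^-1%g A).
    by apply/matrixP => i j; rewrite !mxE.
  by rewrite row_permE col_permE !unitmx_mul !unitmx_perm uA.
- rewrite -(eqP eA) /eta.
  have -> : [seq rowsum (pconj s A) i | i <- enum 'I_n]
          = [seq rowsum A (s^-1%g i) | i <- enum 'I_n].
    apply: eq_map => i; rewrite /rowsum.
    rewrite (reindex_inj (@perm_inj _ s)) /=.
    by apply: eq_bigr => j _; rewrite mxE permK.
  by rewrite (geq_sort_perm (rowsum A)).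
- rewrite -(eqP tA) /theta.
  have -> : [seq colsum (pconj s A) i | i <- enum 'I_n]
          = [seq colsum A (s^-1%g i) | i <- enum 'I_n].
    apply: eq_map => j; rewrite /colsum.
    rewrite (reindex_inj (@perm_inj _ s)) /=.
    by apply: eq_bigr => i _; rewrite mxE permK.
  by rewrite (geq_sort_perm (colsum A)).
Qed.

(* The matrices of the permutation representation beta_{H_n^k}: the basis is
   H_n^k (enumerated by enum_val), and pi sends the basis vector A to pi A pi^-1.
   (MathComp representations act on row vectors, on the right; the product of
   'S_n is (x * y) = y o x, so A |-> pconj s A is a right action.) *)
Definition betaH_mx (n k : nat) (s : 'S_n) : 'M[algC]_#|Hnk n k| :=
  \matrix_(i, j) ((pconj s (enum_val i) == enum_val j)%:R)%R.

Lemma betaH_mx_repr (n k : nat) : mx_repr [set: 'S_n] (@betaH_mx n k).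
Proof.
split.
  apply/matrixP => i j; rewrite !mxE pconj1.
  by rewrite (inj_eq enum_val_inj).
move=> x y _ _; apply/matrixP => i j; rewrite !mxE.
have Hx : pconj x (enum_val i) \in Hnk n k by apply/pconj_Hnk/enum_valP.
rewrite (bigD1 (enum_rank_in Hx (pconj x (enum_val i)))) //= !mxE.
rewrite enum_rankK_in // eqxx mul1r pconjM big1 ?addr0 // => l hl.
rewrite !mxE; case: eqP => [e|]; last by rewrite mul0r.
case/eqP: hl; apply: enum_val_inj; by rewrite enum_rankK_in // e.
Qed.

Definition betaH (n k : nat) : mx_representation algC [set: 'S_n] #|Hnk n k| :=
  MxRepresentation (@betaH_mx_repr n k).

Definition supp_size (n : nat) (C : {set 'S_n}) : nat :=
  #|[set x : 'I_n | repr C x != x]|.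

From mathcomp Require Import all_boot all_algebra all_fingroup all_field all_character.
From mathcomp Require Import zify.

Set Implicit Arguments.
Unset Strict Implicit.
Unset Printing Implicit Defensive.

Import GRing.Theory Num.Theory.

(* Let r t (t < k) be the row of A in H_n^k with sum n - t. Every other row has a
   single 1, and these n - k ones lie in distinct columns since A is invertible;
   those columns have sum k + 1, so they are full on the rows r t, while the k
   remaining columns c u have sums k - u, which forces A (r t) (c u) = [t + u < k].
   Hence A is, up to a permutation s of its columns, the standard matrix of the
   injection r (ones at (r t, r u) for t + u < k, at (r t, y) for y outside the
   image of r, and at (x, x) for x outside it), and (s, r) is determined by A.
   Conjugation by g maps (s, r) to (s ^ g, g o r), so g fixes #|C(g)| (#fix g)_k
   matrices; this is the character of beta_{H_n^k}, and the weight
   #|C(g)| = n! / #|g ^ S_n| turns the mean over S_n in the scalar product into a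
   sum over conjugacy classes. *)

(** * Positions in an injection *)

Section Position.

Variables (n k : nat) (r : {ffun 'I_k -> 'I_n}).

Definition pos (x : 'I_n) : nat :=
  if [pick t | r t == x] is Some t then val t else k.

Lemma pos_ltK x (h : pos x < k) : r (Ordinal h) = x.
Proof.
have [t rt_x val_t] : exists2 t, r t = x & val t = pos x.
  by move: h; rewrite /pos; case: pickP => [t /eqP rt _|_]; [exists t | rewrite ltnn].
by rewrite -[RHS]rt_x; congr (r _); apply: val_inj.
Qed.

Lemma pos_ge_neq x t : k <= pos x -> r t != x.
Proof. by rewrite /pos; case: pickP => [u _|-> //]; rewrite leqNgt ltn_ord. Qed.

Hypothesis r_inj : injective r.

Lemma pos_ffun t : pos (r t) = t.
Proof.
rewrite /pos; case: pickP => [u /eqP /r_inj -> //|/(_ t)].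
by rewrite eqxx.
Qed.

Lemma card_pos_lt m : m <= k -> #|[set x | pos x < m]| = m.
Proof.
move=> le_mk; have widen_inj : injective (widen_ord le_mk) by move=> a b [] /val_inj.
rewrite -[RHS]card_ord -(card_imset _ widen_inj) -(card_imset _ r_inj).
apply: eq_card => x; rewrite inE; apply/idP/imsetP => [lt_xm|[t /imsetP [u _ ->] ->]].
  have lt_xk : pos x < k by apply: leq_trans lt_xm le_mk.
  exists (Ordinal lt_xk); last by rewrite (pos_ltK lt_xk).
  by apply/imsetP; exists (Ordinal lt_xm) => //; apply: val_inj.
by rewrite pos_ffun; exact: (ltn_ord u).
Qed.

Lemma card_pos_ge : #|[set x | k <= pos x]| = n - k.
Proof.
have -> : #|[set x | k <= pos x]| = #|[predC [set x | pos x < k]]|.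
  by apply: eq_card => x; rewrite !inE -leqNgt.
have := cardC [set x | pos x < k]; rewrite card_pos_lt // card_ord; lia.
Qed.

End Position.

(** * Sorted sequences and the targets eta, theta *)

Lemma geq_transitive : transitive geq.
Proof. by move=> b a c /= le_ba le_cb; apply: leq_trans le_cb le_ba. Qed.

Lemma sort_geq_perm (s t : seq nat) : perm_eq s t -> sorted geq t -> sort geq s = t.
Proof.
move=> perm_st sorted_t; rewrite -[RHS](sorted_sort geq_transitive sorted_t).
apply/perm_sortP => //; first by move=> a b; apply: leq_total.
  exact: geq_transitive.
by move=> a b /andP [? ?]; apply/eqP; rewrite eqn_leq; apply/andP; split.
Qed.

Lemma sorted_geq_cat (s t : seq nat) :
  sorted geq s -> sorted geq t -> {in s & t, forall x y, y <= x} ->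
  sorted geq (s ++ t).
Proof.
rewrite !(sorted_pairwise geq_transitive) => ps pt st.
by rewrite pairwise_cat ps pt !andbT; apply/allrelP.
Qed.

Lemma sorted_geq_nseq m c : sorted geq (nseq m c).
Proof. by elim: m => [|[|m] IHm] //=; rewrite leqnn. Qed.

Lemma sorted_geq_sub_iota m c : sorted geq [seq c - i | i <- iota 0 m].
Proof.
apply: (homo_sorted (e := leq)); last exact: iota_sorted.
by move=> i j; apply: leq_sub2l.
Qed.

Lemma sorted_eta_target n k : k <= n -> sorted geq (eta_target n k).
Proof.
move=> le_kn; rewrite sorted_geq_cat ?sorted_geq_sub_iota ?sorted_geq_nseq //.
by move=> x y /mapP [i]; rewrite mem_iota => lt_ik -> /nseqP [-> _]; lia.
Qed.

Lemma sorted_theta_target n k : sorted geq (theta_target n k).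
Proof.
rewrite sorted_geq_cat ?sorted_geq_sub_iota ?sorted_geq_nseq //.
by move=> x y /nseqP [-> _] /mapP [i _ ->]; apply/leqW/leq_subr.
Qed.

Lemma count_eta_target_dense n k t :
  k <= n -> t < k -> count (pred1 (n - t)) (eta_target n k) = 1.
Proof.
move=> le_kn lt_tk; rewrite count_cat count_nseq count_map /=.
rewrite (@eq_in_count _ _ (pred1 t)); last first.
  by move=> i; rewrite mem_iota /= => lt_ik; apply/eqP/eqP; lia.
by rewrite count_uniq_mem ?iota_uniq // mem_iota /= lt_tk; case: eqP => /=; lia.
Qed.

Lemma count_theta_target_stair n k u :
  u < k -> count (pred1 (k - u)) (theta_target n k) = 1.
Proof.
move=> lt_uk; rewrite count_cat count_nseq count_map /=.
rewrite (@eq_in_count _ _ (pred1 u)); last first.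
  by move=> i; rewrite mem_iota /= => lt_ik; apply/eqP/eqP; lia.
by rewrite count_uniq_mem ?iota_uniq // mem_iota /= lt_uk; case: eqP => /=; lia.
Qed.

Lemma count_theta_target_full n k : count (pred1 k.+1) (theta_target n k) = n - k.
Proof.
rewrite count_cat count_nseq count_map /= eqxx mul1n.
rewrite (@eq_in_count _ _ pred0) ?count_pred0 ?addn0 //.
by move=> i; rewrite mem_iota /= => lt_ik; apply/eqP; lia.
Qed.

Lemma mem_eta_target n k v :
  v \in eta_target n k -> v = 1 \/ exists2 t, t < k & v = n - t.
Proof.
rewrite mem_cat => /orP [/mapP [t] | /nseqP [-> _]]; last by left.
by rewrite mem_iota => lt_tk ->; right; exists t.
Qed.

Lemma mem_theta_target n k v :
  v \in theta_target n k -> v = k.+1 \/ exists2 u, u < k & v = k - u.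
Proof.
rewrite mem_cat => /orP [/nseqP [-> _] | /mapP [u]]; first by left.
by rewrite mem_iota => lt_uk ->; right; exists u.
Qed.

(** * Counting and the staircase lemma *)

Lemma card1_pickP (T : finType) (P : pred T) d :
  #|[set x | P x]| = 1 -> forall y, P y = (y == odflt d [pick x | P x]).
Proof.
move/eqP/cards1P => [z P_z] y.
have Pz x : P x = (x == z) by rewrite -in_set1 -P_z inE.
by case: pickP => [x /= |/(_ z)]; rewrite Pz ?eqxx // => /eqP ->; rewrite Pz.
Qed.

Lemma count_map_enum (T : finType) (f : T -> nat) v :
  count (pred1 v) [seq f x | x <- enum T] = #|[set x | f x == v]|.
Proof.
rewrite count_map cardE /enum_mem size_filter count_filter.
by apply: eq_count => x; rewrite !inE andbT.
Qed.

Lemma staircase m (M : nat -> nat -> bool) :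
  (forall t, t < m -> count (M t) (iota 0 m) = m - t) ->
  (forall u, u < m -> count (M^~ u) (iota 0 m) = m - u) ->
  forall t u, t < m -> u < m -> M t u = (t + u < m).
Proof.
elim: m M => [|m IHm] M rows cols // t u lt_tm lt_um.
have iota_first : iota 0 m.+1 = 0 :: [seq i.+1 | i <- iota 0 m].
  by rewrite -add1n iotaD /= (iotaDl 1 0).
have iota_last : iota 0 m.+1 = iota 0 m ++ [:: m] by rewrite -addn1 iotaD.
have row0 v : v < m.+1 -> M 0 v.
  have /allP all_row0 : all (M 0) (iota 0 m.+1) by rewrite all_count rows // size_iota.
  by move=> lt_v; apply: all_row0; rewrite mem_iota.
have col_last t' : t' < m -> ~~ M t'.+1 m.
  have := cols m (ltnSn m); rewrite iota_first /= row0 // subSnn count_map.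
  move/eqP; rewrite eqSS -leqn0 leqNgt -has_count => /hasPn none.
  by move=> lt_t'm; apply: none; rewrite mem_iota.
case: t lt_tm => [|t] lt_tm; first by rewrite row0.
have [lt_um'|] := ltnP u m; last first.
  move=> le_mu; have -> : u = m by lia.
  by rewrite (negbTE (col_last t lt_tm)); apply/esym/negbTE; rewrite -leqNgt addSn ltnS leq_addl.
rewrite (IHm (fun t u => M t.+1 u)) ?addSn // => [t' lt_t'm|u' lt_u'm].
  have := rows t'.+1 lt_t'm; rewrite iota_last count_cat /= (negbTE (col_last t' _)) //.
  by rewrite !addn0.
have := cols u' (ltnW lt_u'm); rewrite iota_first /= (row0 u' (ltnW lt_u'm)) count_map.
by rewrite add1n (subSn (ltnW lt_u'm)) => -[].
Qed.

Lemma count_iota_card m (P : pred nat) : count P (iota 0 m) = #|[set u : 'I_m | P u]|.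
Proof.
rewrite -val_enum_ord count_map cardE /enum_mem size_filter count_filter.
by apply: eq_count => u; rewrite !inE andbT.
Qed.

(** * Matrices over Z_2 *)

Section MatricesOverZ2.

Local Open Scope ring_scope.

Lemma val_Z2 (z : 'Z_2) : val z = (z != 0) :> nat.
Proof. by case: z => [[|[|m]] lt_m2]. Qed.

Lemma Z2_nz (z : 'Z_2) : z = (z != 0)%:R.
Proof. by apply: val_inj; rewrite val_Z2; case: (z != 0). Qed.

Variable n : nat.
Implicit Types (A : 'M['Z_2]_n) (e : rel 'I_n).

Lemma rowsum_card A i : rowsum A i = #|[set j | A i j != 0]|.
Proof.
rewrite /rowsum (eq_bigr _ (fun j _ => val_Z2 (A i j))) -sum1dep_card [RHS]big_mkcond.
by apply: eq_bigr => j _; case: (A i j != 0).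
Qed.

Lemma colsum_card A j : colsum A j = #|[set i | A i j != 0]|.
Proof.
rewrite /colsum (eq_bigr _ (fun i _ => val_Z2 (A i j))) -sum1dep_card [RHS]big_mkcond.
by apply: eq_bigr => i _; case: (A i j != 0).
Qed.

Definition relmx e : 'M['Z_2]_n := \matrix_(i, j) (e i j)%:R.

Lemma relmx_nz e i j : (relmx e i j != 0) = e i j.
Proof. by rewrite mxE; case: (e i j). Qed.

Lemma rowsum_relmx e i : rowsum (relmx e) i = #|[set j | e i j]|.
Proof. by rewrite rowsum_card; apply: eq_card => j; rewrite !inE relmx_nz. Qed.

Lemma colsum_relmx e j : colsum (relmx e) j = #|[set i | e i j]|.
Proof. by rewrite colsum_card; apply: eq_card => i; rewrite !inE relmx_nz. Qed.

Lemma rowsum_col_perm (s : 'S_n) A i : rowsum (col_perm s A) i = rowsum A i.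
Proof.
rewrite /rowsum [LHS](reindex_inj (@perm_inj _ s^-1)).
by apply: eq_bigr => j _; rewrite mxE permKV.
Qed.

Lemma colsum_col_perm (s : 'S_n) A j : colsum (col_perm s A) j = colsum A (s j).
Proof. by apply: eq_bigr => i _; rewrite mxE. Qed.

Lemma eta_col_perm (s : 'S_n) A : eta (col_perm s A) = eta A.
Proof. by rewrite /eta (eq_map (rowsum_col_perm s A)). Qed.

Lemma theta_col_perm (s : 'S_n) A : theta (col_perm s A) = theta A.
Proof. by rewrite /theta (eq_map (colsum_col_perm s A)) (geq_sort_perm (colsum A)). Qed.

Lemma col_perm_Hnk k (s : 'S_n) A : (col_perm s A \in Hnk n k) = (A \in Hnk n k).
Proof.
by rewrite !inE eta_col_perm theta_col_perm col_permE unitmx_mul unitmx_perm andbT.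
Qed.

Lemma mulmx_relmx (v : 'rV['Z_2]_n) e y : (v *m relmx e) 0 y = \sum_(x | e x y) v 0 x.
Proof.
rewrite mxE [RHS]big_mkcond; apply: eq_bigr => x _.
by rewrite mxE; case: (e x y); rewrite ?mulr1 ?mulr0.
Qed.

Lemma unitmx_Z2_ker A : (forall v : 'rV_n, v *m A = 0 -> v = 0) -> A \in unitmx.
Proof.
move=> ker0; rewrite unitmxE.
(* 'Z_2 has no canonical field structure, but the convertible 'F_2 has. *)
suff : \det (A : 'M['F_2]_n) != 0 by rewrite -unitfE.
by apply/negP => /det0P [v /eqP v_nz /ker0].
Qed.

End MatricesOverZ2.

Lemma unitmx_row_inj (R : comUnitRingType) n (B : 'M[R]_n) i i' :
  B \in unitmx -> (forall j, B i j = B i' j) -> i = i'.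
Proof.
move=> B_unit eq_rows; apply/eqP/negPn/negP => neq_ii'.
by move: B_unit; rewrite unitmxE (determinant_alternate neq_ii' eq_rows) unitr0.
Qed.

Lemma unitmx_col_inj (R : comUnitRingType) n (B : 'M[R]_n) j j' :
  B \in unitmx -> (forall i, B i j = B i j') -> j = j'.
Proof.
rewrite -unitmx_tr => B_unit eq_cols; apply: (unitmx_row_inj B_unit) => i.
by rewrite !mxE.
Qed.

(** * The standard matrices and H_n^k *)

Section StandardMatrix.

Variables (n k : nat) (r : {ffun 'I_k -> 'I_n}).

Definition std_rel : rel 'I_n := fun x y =>
  if pos r x < k then (k <= pos r y) || (pos r x + pos r y < k) else x == y.

Definition std_mx : 'M['Z_2]_n := relmx std_rel.

Lemma std_rel_notin x y : k <= pos r y -> std_rel x y = (pos r x < k) || (x == y).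
Proof. by rewrite /std_rel => le_ky; case: ifP => //= _; rewrite le_ky. Qed.

Hypotheses (le_kn : k <= n) (r_inj : injective r).

Lemma std_rel_ffun x t : std_rel x (r t) = (pos r x < k - t).
Proof.
rewrite /std_rel pos_ffun // [k <= t]leqNgt ltn_ord /=; case: ifP => lt_xk.
  by apply/idP/idP; lia.
apply/eqP/idP => [x_rt|]; last lia.
by move: lt_xk; rewrite x_rt pos_ffun // ltn_ord.
Qed.

Lemma card_std_row x :
  #|[set y | std_rel x y]| = if pos r x < k then n - pos r x else 1.
Proof.
rewrite /std_rel; case: ifP => lt_xk; last first.
  by rewrite -[RHS](cards1 x); apply: eq_card => y; rewrite !inE eq_sym.
rewrite (_ : [set y | _] = [set y | k <= pos r y] :|: [set y | pos r y < k - pos r x]).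
  rewrite cardsU card_pos_ge // card_pos_lt ?leq_subr //.
  rewrite (_ : _ :&: _ = set0) ?cards0; first lia.
  by apply/setP => y; rewrite !inE; apply/negbTE; lia.
by apply/setP => y; rewrite !inE; congr (_ || _); lia.
Qed.

Lemma card_std_col y :
  #|[set x | std_rel x y]| = if pos r y < k then k - pos r y else k.+1.
Proof.
case: ifP => lt_yk.
  rewrite -(card_pos_lt r_inj (leq_subr (pos r y) k)); apply: eq_card => x.
  rewrite !inE /std_rel; case: ifP => lt_xk.
    by rewrite [k <= _]leqNgt lt_yk /= ltn_subRL addnC.
  have -> : (x == y) = false by apply: contraFF lt_xk => /eqP ->.
  by apply/esym/negbTE; rewrite -leqNgt (leq_trans (leq_subr _ _)) // leqNgt lt_xk.
rewrite (_ : [set x | _] = y |: [set x | pos r x < k]).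
  by rewrite cardsU1 card_pos_lt // inE lt_yk.
apply/setP => x; rewrite !inE std_rel_notin; last by rewrite leqNgt lt_yk.
by rewrite orbC eq_sym.
Qed.

Lemma perm_eq_pos_split (T : eqType) (f : 'I_n -> T) :
  perm_eq [seq f x | x <- enum 'I_n]
    ([seq f (r t) | t <- enum 'I_k] ++ [seq f x | x <- enum [set x | k <= pos r x]]).
Proof.
have -> : [seq f (r t) | t <- enum 'I_k] = map f (map r (enum 'I_k)).
  by rewrite -map_comp.
rewrite -map_cat; apply/perm_map/uniq_perm => [||x].
- exact: enum_uniq.
- rewrite cat_uniq map_inj_uniq ?enum_uniq //= andbT; apply/hasPn => x.
  rewrite mem_enum inE => le_kx; apply/mapP => -[t _ x_rt].
  by have := pos_ge_neq t le_kx; rewrite x_rt eqxx.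
rewrite mem_enum mem_cat mem_enum !inE; case: (ltnP (pos r x) k) => lt_xk; rewrite ?orbT //.
by rewrite orbF; apply/esym/mapP; exists (Ordinal lt_xk); rewrite ?mem_enum ?pos_ltK.
Qed.

Lemma map_ffun_enum (f : 'I_n -> nat) (g : nat -> nat) :
  (forall t : 'I_k, f (r t) = g t) ->
  [seq f (r t) | t <- enum 'I_k] = [seq g i | i <- iota 0 k].
Proof. by move=> fg; rewrite -val_enum_ord -map_comp; apply: eq_map => t /=. Qed.

Lemma map_notin_enum (f : 'I_n -> nat) c :
  (forall x, k <= pos r x -> f x = c) ->
  [seq f x | x <- enum [set x | k <= pos r x]] = nseq (n - k) c.
Proof.
move=> fc; rewrite -(card_pos_ge r_inj) cardE -(size_map f); apply/all_pred1P/allP.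
by move=> v /mapP [x]; rewrite mem_enum inE => /fc fx_c ->; rewrite fx_c /=.
Qed.

Lemma eta_std_mx : eta std_mx = eta_target n k.
Proof.
apply: sort_geq_perm (sorted_eta_target le_kn).
apply: perm_trans (perm_eq_pos_split _) _; rewrite /eta_target.
rewrite (@map_ffun_enum _ (subn n)) => [|t]; last first.
  by rewrite rowsum_relmx card_std_row pos_ffun // ltn_ord.
rewrite (@map_notin_enum _ 1) // => x le_kx.
by rewrite rowsum_relmx card_std_row ltnNge le_kx.
Qed.

Lemma theta_std_mx : theta std_mx = theta_target n k.
Proof.
apply: sort_geq_perm (sorted_theta_target n k).
apply: perm_trans (perm_eq_pos_split _) _; rewrite perm_catC /theta_target.
rewrite (@map_ffun_enum _ (subn k)) => [|t]; last first.
  by rewrite colsum_relmx card_std_col pos_ffun // ltn_ord.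
rewrite (@map_notin_enum _ k.+1) // => y le_ky.
by rewrite colsum_relmx card_std_col ltnNge le_ky.
Qed.

Lemma std_mx_unit : std_mx \in unitmx.
Proof.
apply: unitmx_Z2_ker => v v_ker.
(* S m sums v over the rows r t with t < m; column r t of v *m std_mx = 0
   reads S (k - t) = 0. *)
have col0 y : (\sum_(x | std_rel x y) v 0 x = 0)%R by rewrite -mulmx_relmx v_ker mxE.
pose S m := (\sum_(x | (pos r x < m)%N) v 0 x)%R.
have S_stair m : m <= k -> S m = 0%R.
  case: m => [|m] lt_mk; first by rewrite /S big_pred0.
  have lt_t : k - m.+1 < k by lia.
  rewrite -(col0 (r (Ordinal lt_t))); apply: eq_bigl => x.
  by rewrite std_rel_ffun /= subKn.
have S_succ (t : 'I_k) : S t.+1 = (v 0 (r t) + S t)%R.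
  rewrite /S (bigD1 (r t)) /= ?pos_ffun //; congr (_ + _)%R; apply: eq_bigl => x.
  case: (eqVneq x (r t)) => [->|x_rt]; rewrite ?andbF ?andbT.
    by rewrite pos_ffun // ltnn.
  rewrite ltnS leq_eqVlt; case: (eqVneq (pos r x) t) => //= pos_x.
  have lt_xk : pos r x < k by rewrite pos_x.
  case/eqP: x_rt; rewrite -[LHS](pos_ltK lt_xk); congr (r _); exact: val_inj.
have v_dense (t : 'I_k) : (v 0 (r t) = 0)%R.
  by have := S_succ t; rewrite !S_stair ?addr0 // ltnW.
apply/rowP => y; rewrite mxE; case: (ltnP (pos r y) k) => [lt_yk|le_ky].
  by rewrite -(pos_ltK lt_yk) v_dense.
rewrite -(col0 y) (bigD1 y) /= ?std_rel_notin // ?eqxx ?orbT //.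
rewrite -[LHS]addr0; congr (_ + _)%R; rewrite -[LHS](S_stair k (leqnn k)).
apply: eq_bigl => x; rewrite std_rel_notin //.
by case: (eqVneq x y) => [->|]; rewrite ?andbF ?andbT ?orbF // ltnNge le_ky.
Qed.

Lemma std_mx_Hnk : std_mx \in Hnk n k.
Proof. by rewrite inE std_mx_unit eta_std_mx theta_std_mx !eqxx. Qed.

End StandardMatrix.

Section HnkModel.

Variables (n k : nat) (le_kn : k <= n).
Implicit Types (r : {ffun 'I_k -> 'I_n}) (s g : 'S_n).

Definition Hmx (s : 'S_n) (r : {ffun 'I_k -> 'I_n}) : 'M['Z_2]_n := col_perm s (std_mx r).

Lemma Hmx_Hnk s r : injective r -> Hmx s r \in Hnk n k.
Proof. by move=> r_inj; rewrite col_perm_Hnk (std_mx_Hnk le_kn r_inj). Qed.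

Lemma pos_comp g r x : pos [ffun t => g (r t)] x = pos r (g^-1 x)%g.
Proof.
rewrite /pos (@eq_pick _ _ (fun t => r t == (g^-1)%g x)) // => t.
by rewrite ffunE -(inj_eq (@perm_inj _ g^-1)) permK.
Qed.

Lemma std_rel_comp g r x y :
  std_rel [ffun t => g (r t)] (g x) (g y) = std_rel r x y.
Proof. by rewrite /std_rel !pos_comp !permK (inj_eq (@perm_inj _ g)). Qed.

Lemma pconj_Hmx g s r :
  pconj g (Hmx s r) = Hmx (s ^ g)%g [ffun t => g (r t)].
Proof.
apply/matrixP => x j; rewrite !mxE.
have -> : (s ^ g)%g j = g (s (g^-1 j))%g by rewrite conjgE !permM.
by rewrite -{2}(permKV g x) std_rel_comp.
Qed.

End HnkModel.

Section HnkStructure.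

Variables (n k : nat) (le_kn : k <= n) (A : 'M['Z_2]_n).
Hypothesis A_Hnk : A \in Hnk n k.

Lemma card_rowsum_eq v : #|[set x | rowsum A x == v]| = count (pred1 v) (eta_target n k).
Proof.
have : perm_eq [seq rowsum A x | x <- enum 'I_n] (eta_target n k).
  by move: A_Hnk; rewrite inE => /and3P [_ /eqP <- _]; rewrite /eta perm_sym perm_sort.
by rewrite -count_map_enum => /seq.permP ->.
Qed.

Lemma card_colsum_eq v : #|[set j | colsum A j == v]| = count (pred1 v) (theta_target n k).
Proof.
have : perm_eq [seq colsum A j | j <- enum 'I_n] (theta_target n k).
  by move: A_Hnk; rewrite inE => /and3P [_ _ /eqP <-]; rewrite /theta perm_sym perm_sort.
by rewrite -count_map_enum => /seq.permP ->.
Qed.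

Lemma rowsum_in_target x : rowsum A x \in eta_target n k.
Proof.
rewrite -has_pred1 has_count -card_rowsum_eq card_gt0.
by apply/set0Pn; exists x; rewrite inE.
Qed.

Lemma colsum_in_target j : colsum A j \in theta_target n k.
Proof.
rewrite -has_pred1 has_count -card_colsum_eq card_gt0.
by apply/set0Pn; exists j; rewrite inE.
Qed.

Definition dense_rows : {ffun 'I_k -> 'I_n} :=
  [ffun t => odflt (widen_ord le_kn t) [pick x | rowsum A x == n - t]].

Local Notation r := dense_rows.

Lemma rowsum_dense_rows x (t : 'I_k) : (rowsum A x == n - t) = (x == r t).
Proof.
rewrite ffunE; apply: (card1_pickP (P := fun x => rowsum A x == n - t)).
by rewrite card_rowsum_eq count_eta_target_dense.
Qed.

Lemma rowsum_dense t : rowsum A (r t) = n - t.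
Proof. by apply/eqP; rewrite rowsum_dense_rows. Qed.

Lemma dense_rows_inj : injective r.
Proof.
move=> t t' /(congr1 (rowsum A)); rewrite !rowsum_dense => eq_sub.
by apply: ord_inj; move: (ltn_ord t) (ltn_ord t'); lia.
Qed.

Lemma rowsum_sparse x : k <= pos r x -> rowsum A x = 1.
Proof.
move=> le_kx; case: (mem_eta_target (rowsum_in_target x)) => // -[t lt_tk].
move/eqP; rewrite (rowsum_dense_rows x (Ordinal lt_tk)) => /eqP x_rt.
by have := pos_ge_neq (Ordinal lt_tk) le_kx; rewrite x_rt eqxx.
Qed.

Definition sparse_col x : 'I_n := odflt x [pick j | (A x j != 0)%R].

Lemma sparse_row x j : k <= pos r x -> (A x j != 0)%R = (j == sparse_col x).
Proof.
move=> le_kx; apply: (card1_pickP (P := fun j => A x j != 0)%R).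
by rewrite -rowsum_card rowsum_sparse.
Qed.

Lemma sparse_col_inj : {in [set x | k <= pos r x] &, injective sparse_col}.
Proof.
move=> x y; rewrite !inE => le_kx le_ky eq_xy.
have A_unit : A \in unitmx by move: A_Hnk; rewrite inE => /and3P [].
apply: (unitmx_row_inj A_unit) => j; rewrite [LHS]Z2_nz [RHS]Z2_nz.
by rewrite !sparse_row // eq_xy.
Qed.

Definition sparse_cols : {set 'I_n} := sparse_col @: [set x | k <= pos r x].

Lemma card_sparse_cols : #|sparse_cols| = n - k.
Proof.
rewrite card_in_imset ?card_pos_ge //; [exact: dense_rows_inj | exact: sparse_col_inj].
Qed.

Lemma colsum_split j :
  colsum A j = #|[set t | A (r t) j != 0]%R| + (j \in sparse_cols).
Proof.
rewrite colsum_card -(cardsID [set x | pos r x < k]); congr (_ + _).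
  rewrite -(card_imset _ dense_rows_inj); apply: eq_card => x; rewrite !inE.
  apply/andP/imsetP => [[nz_xj lt_xk]|[t]]; first by exists (Ordinal lt_xk); rewrite ?inE pos_ltK.
  by rewrite inE => nz_tj ->; rewrite pos_ffun ?ltn_ord //; apply: dense_rows_inj.
case: (boolP (j \in sparse_cols)) => [/imsetP [x0 + ->]|j_notin].
  rewrite inE => le_kx0; apply/eqP/cards1P; exists x0; apply/setP => x.
  rewrite !inE -leqNgt; case: (leqP k (pos r x)) => [le_kx|lt_xk] /=; last first.
    by apply/esym/eqP => x_x0; move: lt_xk; rewrite x_x0 ltnNge le_kx0.
  rewrite sparse_row //; apply/eqP/eqP => [/esym|->] //.
  by apply: sparse_col_inj => //; rewrite inE.
suff -> : [set x | A x j != 0]%R :\: [set x | pos r x < k] = set0 by rewrite cards0.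
apply/setP => x; rewrite !inE -leqNgt.
apply/negbTE/andP => -[le_kx]; rewrite sparse_row // => /eqP j_x.
by move: j_notin; rewrite j_x imset_f // inE.
Qed.

Lemma card_dense_le j : #|[set t | A (r t) j != 0]%R| <= k.
Proof. by rewrite -[k in _ <= k]card_ord max_card. Qed.

Lemma colsum_full j : (colsum A j == k.+1) = (j \in sparse_cols).
Proof.
have sub : [set j | colsum A j == k.+1] \subset sparse_cols.
  apply/subsetP => j'; rewrite inE colsum_split => /eqP full.
  apply: contraTT (card_dense_le j') => /negbTE j'_out.
  by rewrite -ltnNge; move: full; rewrite j'_out addn0 => ->.
have := sub; rewrite subEproper properEcard sub card_colsum_eq count_theta_target_full.
by rewrite card_sparse_cols ltnn orbF => /eqP <-; rewrite inE.
Qed.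

Lemma sparse_cols_dense j t : j \in sparse_cols -> (A (r t) j != 0)%R.
Proof.
move=> j_in; move: (j_in); rewrite -colsum_full colsum_split j_in addn1 eqSS => /eqP card_k.
have full : [set t | A (r t) j != 0]%R = [set: 'I_k].
  by apply/eqP; rewrite eqEcard subsetT cardsT card_ord card_k leqnn.
by have := in_setT t; rewrite -full inE.
Qed.

Definition stair_cols : {ffun 'I_k -> 'I_n} :=
  [ffun u => odflt (widen_ord le_kn u) [pick j | colsum A j == k - u]].

Local Notation c := stair_cols.

Lemma colsum_stair_cols j (u : 'I_k) : (colsum A j == k - u) = (j == c u).
Proof.
rewrite ffunE; apply: (card1_pickP (P := fun j => colsum A j == k - u)).
by rewrite card_colsum_eq count_theta_target_stair.
Qed.

Lemma colsum_stair u : colsum A (c u) = k - u.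
Proof. by apply/eqP; rewrite colsum_stair_cols. Qed.

Lemma stair_cols_inj : injective c.
Proof.
move=> u u' /(congr1 (colsum A)); rewrite !colsum_stair => eq_sub.
by apply: ord_inj; move: (ltn_ord u) (ltn_ord u'); lia.
Qed.

Lemma stair_cols_notin u : c u \notin sparse_cols.
Proof. by rewrite -colsum_full colsum_stair; apply/eqP; lia. Qed.

Lemma stair_cols_cover j : j \notin sparse_cols -> j \in codom c.
Proof.
rewrite -colsum_full; case: (mem_theta_target (colsum_in_target j)) => [->|[u lt_uk]].
  by rewrite eqxx.
by move/eqP; rewrite (colsum_stair_cols j (Ordinal lt_uk)) => /eqP -> _; apply: codom_f.
Qed.

Lemma card_dense_stair u : #|[set t | A (r t) (c u) != 0]%R| = k - u.
Proof. by have := colsum_stair u; rewrite colsum_split (negbTE (stair_cols_notin u)) addn0. Qed.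

Lemma card_stair_dense t : #|[set u | A (r t) (c u) != 0]%R| = k - t.
Proof.
have := rowsum_dense t; rewrite rowsum_card -(cardsID sparse_cols).
have -> : [set j | A (r t) j != 0]%R :&: sparse_cols = sparse_cols.
  by apply/setIidPr/subsetP => j j_in; rewrite inE sparse_cols_dense.
have -> : [set j | A (r t) j != 0]%R :\: sparse_cols = c @: [set u | A (r t) (c u) != 0]%R.
  apply/setP => j; rewrite !inE; apply/andP/imsetP => [[/stair_cols_cover /codomP [u ->] nz_u]|[u]].
    by exists u; rewrite ?inE.
  by rewrite inE => nz_u ->; rewrite stair_cols_notin.
rewrite (card_imset _ stair_cols_inj) card_sparse_cols.
by move: (ltn_ord t); lia.
Qed.

Lemma dense_stair t u : (A (r t) (c u) != 0)%R = (t + u < k).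
Proof.
pose M i j := if insub i : option 'I_k is Some t' then
                if insub j : option 'I_k is Some u' then (A (r t') (c u') != 0)%R else false
              else false.
have M_ord (t' u' : 'I_k) : M t' u' = (A (r t') (c u') != 0)%R by rewrite /M !valK.
rewrite -M_ord; apply: staircase => // [i lt_ik|j lt_jk].
  rewrite count_iota_card -(card_stair_dense (Ordinal lt_ik)).
  by apply: eq_card => u'; rewrite !inE -M_ord.
rewrite count_iota_card -(card_dense_stair (Ordinal lt_jk)).
by apply: eq_card => t'; rewrite !inE -M_ord.
Qed.

Definition std_col x : 'I_n :=
  if insub (pos r x) : option 'I_k is Some t then c t else sparse_col x.

Lemma std_col_dense t : std_col (r t) = c t.
Proof. by rewrite /std_col pos_ffun ?valK //; apply: dense_rows_inj. Qed.

Lemma std_col_sparse x : k <= pos r x -> std_col x = sparse_col x.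
Proof. by move=> le_kx; rewrite /std_col insubN // -leqNgt. Qed.

Lemma std_col_inj : injective std_col.
Proof.
have sparse_in x : k <= pos r x -> sparse_col x \in sparse_cols.
  by move=> le_kx; apply: imset_f; rewrite inE.
move=> x y; case: (ltnP (pos r x) k) => [lt_xk|le_kx]; case: (ltnP (pos r y) k) => [lt_yk|le_ky].
- rewrite -(pos_ltK lt_xk) -(pos_ltK lt_yk) !std_col_dense.
  by move/stair_cols_inj ->.
- rewrite -(pos_ltK lt_xk) std_col_dense std_col_sparse // => stair_sparse.
  by have := stair_cols_notin (Ordinal lt_xk); rewrite stair_sparse sparse_in.
- rewrite -(pos_ltK lt_yk) std_col_dense std_col_sparse // => sparse_stair.
  by have := stair_cols_notin (Ordinal lt_yk); rewrite -sparse_stair sparse_in.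
- by rewrite !std_col_sparse //; apply: sparse_col_inj; rewrite inE.
Qed.

Lemma Hnk_std_col x y : (A x (std_col y) != 0)%R = std_rel r x y.
Proof.
rewrite /std_rel; case: (ltnP (pos r x) k) => [lt_xk|le_kx]; last first.
  by rewrite sparse_row // -(std_col_sparse le_kx) (inj_eq std_col_inj) eq_sym.
rewrite -{1}(pos_ltK lt_xk); case: (ltnP (pos r y) k) => [lt_yk|le_ky] /=.
  by rewrite -{1}(pos_ltK lt_yk) std_col_dense dense_stair.
by rewrite std_col_sparse // sparse_cols_dense //; apply: imset_f; rewrite inE.
Qed.

Lemma Hnk_eq_Hmx : A = Hmx (perm std_col_inj)^-1 r.
Proof.
apply/matrixP => x j; rewrite !mxE -Hnk_std_col.
by rewrite -[j in LHS](permKV (perm std_col_inj)) permE -Z2_nz.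
Qed.

End HnkStructure.

Section HmxBijection.

Variables (n k : nat) (le_kn : k <= n).
Implicit Types (r : {ffun 'I_k -> 'I_n}) (s : 'S_n).

Lemma dense_rows_Hmx s r : injective r -> dense_rows le_kn (Hmx s r) = r.
Proof.
move=> r_inj; apply/ffunP => t; apply/esym/eqP.
rewrite -(rowsum_dense_rows le_kn (Hmx_Hnk le_kn s r_inj)).
by rewrite rowsum_col_perm rowsum_relmx card_std_row // pos_ffun // ltn_ord.
Qed.

Lemma Hmx_inj s s' r r' : injective r -> injective r' ->
  Hmx s r = Hmx s' r' -> s = s' /\ r = r'.
Proof.
move=> r_inj r'_inj eq_H.
have eq_r : r = r' by rewrite -(dense_rows_Hmx s r_inj) eq_H dense_rows_Hmx.
split=> //; subst r'; apply/permP => j.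
apply: (unitmx_col_inj (std_mx_unit le_kn r_inj)) => x.
by move/matrixP: eq_H => /(_ x j); rewrite !mxE.
Qed.

Lemma Hnk_Hmx A : A \in Hnk n k -> exists s r, injective r /\ A = Hmx s r.
Proof.
move=> A_Hnk; exists (perm (std_col_inj (le_kn := le_kn) A_Hnk))^-1%g.
by exists (dense_rows le_kn A); split; [exact: dense_rows_inj | exact: Hnk_eq_Hmx].
Qed.

End HmxBijection.

(** * Fixed points and the character of beta_{H_n^k} *)

Lemma conjg_fix_cent1 (gT : finGroupType) (x g : gT) :
  ((x ^ g)%g == x) = (x \in 'C[g])%g.
Proof. by rewrite cent1E conjgC eq_sym (inj_eq (mulgI g)). Qed.

Lemma card_Hnk_fixed n k (le_kn : k <= n) (g : 'S_n) :
  #|[set A in Hnk n k | pconj g A == A]| = #|'C[g]%g| * #|[set x | g x == x]| ^_ k.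
Proof.
pose fixed := [set x | g x == x].
pose Q := setX 'C[g]%g [set r : {ffun 'I_k -> 'I_n} in ffun_on (mem fixed) | injectiveb r].
have inQ s (r : {ffun 'I_k -> 'I_n}) :
    ((s, r) \in Q) = [&& injectiveb r, (s ^ g)%g == s & [ffun t => g (r t)] == r].
  rewrite in_setX -conjg_fix_cent1 in_set /=.
  have -> : (r \in ffun_on (mem fixed)) = ([ffun t => g (r t)] == r).
    apply/ffun_onP/eqP => [fixed_r|fixed_r t]; last by rewrite inE -{2}fixed_r ffunE.
    by apply/ffunP => t; rewrite ffunE; apply/eqP; have := fixed_r t; rewrite inE.
  by case: (injectiveb r); case: (_ == s); case: (_ == r).
have -> : [set A in Hnk n k | pconj g A == A] = (fun p => Hmx p.1 p.2) @: Q.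
  apply/setP => A; rewrite inE; apply/andP/imsetP => [[A_Hnk fixed_A]|[[s r] sr_Q ->]].
    have [s [r [r_inj A_H]]] := Hnk_Hmx le_kn A_Hnk.
    have gr_inj : injective [ffun t => g (r t)].
      by move=> a b; rewrite !ffunE => /perm_inj /r_inj.
    move: fixed_A; rewrite A_H pconj_Hmx => /eqP /(Hmx_inj le_kn gr_inj r_inj) [s_fix r_fix].
    by exists (s, r) => //; rewrite inQ s_fix r_fix !eqxx /= andbT; apply/injectiveP.
  move: sr_Q; rewrite inQ => /and3P [/injectiveP r_inj /eqP s_fix /eqP r_fix].
  by rewrite Hmx_Hnk // pconj_Hmx s_fix r_fix eqxx.
rewrite card_in_imset => [|[s r] [s' r']]; last first.
  rewrite !inQ => /and3P [/injectiveP r_inj _ _] /and3P [/injectiveP r'_inj _ _].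
  by move/(Hmx_inj le_kn r_inj r'_inj) => [/= -> ->].
by rewrite cardsX card_inj_ffuns_on card_ord.
Qed.

Lemma card_fixed_conjg n (x h : 'S_n) :
  #|[set y | (x ^ h)%g y == y]| = #|[set y | x y == y]|.
Proof.
rewrite -[RHS](card_imset _ (@perm_inj _ h)); apply: eq_card => y.
rewrite inE conjgE !permM.
rewrite -{2}(permKV h y) (inj_eq (@perm_inj _ h)); apply/idP/imsetP => [fix_y|[z]].
  by exists (h^-1 y)%g; rewrite ?inE ?permKV.
by rewrite inE => fix_z ->; rewrite permK.
Qed.

Lemma card_fixed_supp n (s : 'S_n) :
  #|[set x | s x == x]| = n - #|[set x | s x != x]|.
Proof.
have -> : [set x | s x == x] = ~: [set x | s x != x] by apply/setP => x; rewrite !inE negbK.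
by have := cardsC [set x | s x != x]; rewrite card_ord; lia.
Qed.

Local Open Scope ring_scope.

Lemma mean_cent1_by_classes (gT : finGroupType) (G : {group gT}) (R : numFieldType)
    (F : gT -> R) :
  {in G &, forall x y, F (x ^ y)%g = F x} ->
  #|G|%:R^-1 * \sum_(x in G) #|'C_G[x]%g|%:R * F x = \sum_(C in classes G) F (repr C).
Proof.
move=> F_conj.
have card_cent1J x y : y \in G -> #|'C_G[x ^ y]%g| = #|'C_G[x]%g|.
  by move=> Gy; rewrite cent1J -{1}(conjGid Gy) -conjIg cardJg.
rewrite sum_by_classes => [|x y Gx Gy]; last by rewrite card_cent1J ?F_conj.
rewrite mulr_sumr; apply: eq_bigr => _ /imsetP [x Gx ->].
have [z Gz ->] := repr_class G x.
rewrite card_cent1J // (mulrA #|(x ^: G)%g|%:R) -natrM -index_cent1 mulnC.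
rewrite Lagrange ?subsetIl //.
by rewrite mulKf // pnatr_eq0 -lt0n cardG_gt0.
Qed.

Lemma cfRepr_betaH n k (g : 'S_n) :
  cfRepr (betaH n k) g = #|[set A in Hnk n k | pconj g A == A]|%:R.
Proof.
rewrite cfunE inE mulr1n /mxtrace.
rewrite (eq_bigr (fun i => ((pconj g (enum_val i) == enum_val i)%:R : algC))); last first.
  by move=> i _; rewrite mxE.
rewrite -(big_enum_val (fun A => ((pconj g A == A)%:R : algC))) /=.
rewrite -natr_sum -sum1dep_card; congr (_%:R).
rewrite (big_mkcond (fun A => _ \in _)) [RHS]big_mkcond /=; apply: eq_bigr => A _.
by case: (A \in Hnk n k); case: (_ == _).
Qed.

Theorem mainTheorem6 (n k : nat) (hk : (k <= n)%N) (i : Iirr [set: 'S_n]) :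
  '[cfRepr (betaH n k), 'chi_i] =
  \sum_(C in classes [set: 'S_n]) 'chi_i (repr C) * ((n - supp_size C) ^_ k)%:R.
Proof.
pose fixed_k (x : 'S_n) := #|[set y | x y == y]| ^_ k.
have betaH_val x : cfRepr (betaH n k) x = (#|'C_[set: 'S_n][x]%g| * fixed_k x)%:R.
  by rewrite cfRepr_betaH card_Hnk_fixed // setTI.
transitivity (\sum_(C in classes [set: 'S_n]) 'chi_i (repr C) * (fixed_k (repr C))%:R); last first.
  by apply: eq_bigr => C _; rewrite /fixed_k card_fixed_supp.
rewrite -(mean_cent1_by_classes (F := fun x => 'chi_i x * (fixed_k x)%:R)) => [|x y _ _].
  rewrite cfdotC_char ?cfRepr_char ?irr_char // cfdotE; congr (_ * _).
  by apply: eq_bigr => x _; rewrite betaH_val conjC_nat natrM mulrCA.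
by rewrite cfunJ ?inE // /fixed_k card_fixed_conjg.
Qed.
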